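(* Suppose that for every $e\in E$ the restriction $p_e|_{K_{i(e)}}$ is Dini-continuous and that there exists $\delta>0$ with $p_e|_{K_{i(e)}}\ge\delta$ for all $e\in E$. Let $x_i\in K_i$ for all $1\le i\le N$ and $x\in K$. Then for every integer $m\le 0$ the measure $P^m_x$ is absolutely continuous with respect to $P^m_{x_1\dots x_N}$ on $(\Sigma,\mathcal{A}_m)$.
   Context: A contractive Markov system (CMS) with average contracting rate $0<a<1$ consists of: a finite directed multigraph $(V,E,i,t)$ with vertex set $V=\{1,\dots,N\}$, finite edge set $E$, and maps $i,t:E\to V$ giving the initial and terminal vertex of each edge; a complete metric space $(K,d)$ partitioned into non-empty Borel sets $K_1,\dots,K_N$; Borel measurable maps $w_e:K\to K$ ($e\in E$) with $w_e(K_{i(e)})\subset K_{t(e)}$; Borel measurable functions $p_e:K\to[0,\infty)$ with $\sum_{e\in E}p_e(x)=1$ for all $x\in K$ and $p_e=0$ on $K\setminus K_{i(e)}$; and such that $\sum_{e\in E}p_e(x)d(w_ex,w_ey)\leq a\,d(x,y)$ for all $x,y\in K_j$, $j=1,\dots,N$. A function $f:(X,d)\to\mathbb{R}$ is Dini-continuous if $\int_0^c\frac{\phi(t)}{t}dt<\infty$ for some $c>0$, where $\phi(t):=\sup\{|f(x)-f(y)|:d(x,y)\le t,\ x,y\in X\}$ is its modulus of uniform continuity. Let $\Sigma:=E^{\mathbb{Z}}$. For $m\le n$ the cylinder $_m[e_m,\dots,e_n]:=\{\sigma\in\Sigma:\sigma_j=e_j,\ m\le j\le n\}$. For an integer $m\le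 1$, $\mathcal{A}_m$ is the $\sigma$-algebra generated by the cylinders $_m[e_m,\dots,e_n]$, $n\ge m$. For $x\in K$, $P^m_x$ is the probability measure on $(\Sigma,\mathcal{A}_m)$ with $P^m_x(_m[e_m,\dots,e_n])=p_{e_m}(x)\,p_{e_{m+1}}(w_{e_m}x)\cdots p_{e_n}(w_{e_{n-1}}\circ\cdots\circ w_{e_m}x)$. For fixed $x_i\in K_i$, $P^m_{x_1\dots x_N}:=\int P^m_y\,d\big(\frac1N\sum_{i=1}^N\delta_{x_i}\big)(y)=\frac1N\sum_{i=1}^N P^m_{x_i}$. *)

From HB Require Import structures.
From mathcomp Require Import all_boot all_order all_algebra.
From mathcomp Require Import all_classical all_reals all_analysis.
Set Implicit Arguments. Unset Strict Implicit. Unset Printing Implicit Defensive.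
Import Order.TTheory GRing.Theory Num.Theory.
Local Open Scope classical_set_scope.
Local Open Scope ring_scope.

Section CMSDefs.
Variable R : realType.

Definition metric_axioms {K : Type} (d : K -> K -> R) : Prop :=
  [/\ forall x y, 0 <= d x y,
      forall x y, d x y = 0 <-> x = y,
      forall x y, d x y = d y x &
      forall x y z, d x z <= d x y + d y z].

Definition cauchy_seq {K : Type} (d : K -> K -> R) (u : nat -> K) : Prop :=
  forall eps, 0 < eps -> exists N0 : nat,
    forall n k, (N0 <= n)%N -> (N0 <= k)%N -> d (u n) (u k) < eps.

Definition d_converges {K : Type} (d : K -> K -> R) (u : nat -> K) (l : K) : Prop :=
  forall eps, 0 < eps -> exists N0 : nat, forall n, (N0 <= n)%N -> d (u n) l < eps.

Definition complete_metric {K : Type} (d : K -> K -> R) : Prop :=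
  metric_axioms d /\ forall u, cauchy_seq d u -> exists l, d_converges d u l.

Definition d_open {K : Type} (d : K -> K -> R) (U : set K) : Prop :=
  forall x, U x -> exists r, 0 < r /\ [set y | d x y < r] `<=` U.

Definition d_borel {K : Type} (d : K -> K -> R) : set (set K) :=
  <<s setT, d_open d >>.

Definition borel_map {K : Type} (d : K -> K -> R) (f : K -> K) : Prop :=
  forall B, d_borel d B -> d_borel d (f @^-1` B).

Definition borel_rfun {K : Type} (d : K -> K -> R) (f : K -> R) : Prop :=
  forall B : set R, measurable B -> d_borel d (f @^-1` B).

(* vertices V = 'I_N (i.e. {1,...,N}), edges E a finite type,
   ini/ter = the maps i, t : E -> V, Kp i = K_i, w e = w_e, p e = p_e *)
Definition is_CMS (N : nat) (E : finType) (ini ter : E -> 'I_N)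
  (K : Type) (d : K -> K -> R) (Kp : 'I_N -> set K)
  (w : E -> K -> K) (p : E -> K -> R) (a : R) : Prop :=
  [/\ complete_metric d,
      [/\ forall i, Kp i !=set0,
          forall i j, i != j -> Kp i `&` Kp j = set0,
          forall x, exists i, Kp i x &
          forall i, d_borel d (Kp i)],
      (forall e, borel_map d (w e)) /\ (forall e, w e @` Kp (ini e) `<=` Kp (ter e)),
      [/\ forall e, borel_rfun d (p e),
          forall e x, 0 <= p e x,
          forall x, \sum_(e : E) p e x = 1 &
          forall e x, ~ Kp (ini e) x -> p e x = 0] &
      0 < a < 1 /\
      (forall j x y, Kp j x -> Kp j y ->
         \sum_(e : E) p e x * d (w e x) (w e y) <= a * d x y)].

Definition modulus {K : Type} (d : K -> K -> R) (A : set K) (f : K -> R) (t : R)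
  : \bar R :=
  ereal_sup [set r | exists x y, [/\ A x, A y, d x y <= t & r = (`|f x - f y|)%:E]].

Definition dini_continuous {K : Type} (d : K -> K -> R) (A : set K) (f : K -> R)
  : Prop :=
  exists c : R, 0 < c /\
    (\int[@lebesgue_measure R]_(t in `]0%R, c]%classic) (modulus d A f t * (t^-1)%:E) < +oo)%E.

Definition Sigma (E : Type) := int -> E.

(* the cylinder _m[e_m, ..., e_n] with s = [:: e_m; ...; e_n] *)
Definition cyl {E : Type} (m : int) (s : seq E) : set (Sigma E) :=
  [set sg | forall k : nat, (k < size s)%N -> sg (m + k%:Z) = nth (sg (m + k%:Z)) s k].

Definition cylinders {E : Type} (m : int) : set (set (Sigma E)) :=
  [set A | exists s : seq E, (0 < size s)%N /\ A = cyl m s].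

Definition A_sigma {E : Type} (m : int) : set (set (Sigma E)) :=
  <<s setT, @cylinders E m >>.

(* p_{e_m}(x) p_{e_{m+1}}(w_{e_m} x) ... p_{e_n}(w_{e_{n-1}} o ... o w_{e_m} x) *)
Fixpoint cylP {E K : Type} (w : E -> K -> K) (p : E -> K -> R) (x : K) (s : seq E)
  : R :=
  match s with
  | [::] => 1
  | e :: s' => p e x * cylP w p (w e x) s'
  end.

Definition is_probability_on {T : Type} (S : set (set T)) (mu : set T -> \bar R)
  : Prop :=
  [/\ mu set0 = 0%E,
      forall A, S A -> (0 <= mu A)%E,
      mu setT = 1%E &
      forall F : nat -> set T, (forall n, S (F n)) -> trivIset setT F ->
        (fun n => \sum_(0 <= i < n) mu (F i))%E @ \oo --> mu (\bigcup_n F n)].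

Definition abs_continuous_on {T : Type} (S : set (set T)) (mu nu : set T -> \bar R)
  : Prop :=
  forall A, S A -> nu A = 0%E -> mu A = 0%E.

End CMSDefs.

(* Fix [x], [y] in the same part [K_j] and drive both with the same edges
   [e_1, e_2, ...]. As every [p_e >= δ] on its support, the ratio of the
   cylinder probabilities [P_x] / [P_y] is at most [exp V], where the variation
   [V] adds up [|p_(e_k)(x_k) - p_(e_k)(y_k)| / δ] along the two trajectories.
   Average contractivity makes [d(x_k, y_k)] decay like [a^k] in mean, and Dini
   continuity of the [p_e] then bounds the mean of [V] under [P_x] uniformly in
   the length of the cylinders. By Markov's inequality, [P_x B <= e^L P_y B + ε]
   on finite unions [B] of cylinders with [L] independent of [B], and a monotone
   class argument extends this to [A_m]; so [P_y]-null sets are [P_x]-null.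
   Applying this with [y = x_j], [x ∈ K_j], gives the theorem. *)

From HB Require Import structures.
From mathcomp Require Import all_boot all_order all_algebra.
From mathcomp Require Import all_classical all_reals all_analysis.
From mathcomp Require Import lra ring.
Import Order.TTheory GRing.Theory Num.Theory.

Set Implicit Arguments.
Unset Strict Implicit.
Unset Printing Implicit Defensive.

Local Open Scope classical_set_scope.
Local Open Scope ring_scope.

Section affine_domination.
Context {R : realType} {d : measure_display} {T : measurableType d}.
Variables (mu nu : {measure set T -> \bar R}).
Hypothesis nu_fin : (nu setT < +oo)%E.

Definition affinely_dominated (C eps : R) : set (set T) :=
  [set A | measurable A /\ (mu A <= C%:E * nu A + eps%:E)%E].

Lemma affinely_dominated_monotone C eps : 0 <= C ->
  monotone (affinely_dominated C eps).
Proof.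
move=> C0; split=> F monoF domF.
- have mF i : measurable (F i) := (domF i).1.
  have mU : measurable (\bigcup_n F n) by exact: bigcupT_measurable.
  split=> //; apply: cvge_to_le (nondecreasing_cvg_mu mF mU monoF) _.
  apply: nearW => n /=; apply: le_trans (domF n).2 _.
  by rewrite leeD2r // lee_wpmul2l ?lee_fin // le_measure ?inE //; exact: bigcup_sup.
- have mF i : measurable (F i) := (domF i).1.
  have mI : measurable (\bigcap_n F n) by exact: bigcapT_measurable.
  have nuF0 : (nu (F 0%N) < +oo)%E.
    by apply: le_lt_trans nu_fin; rewrite le_measure ?inE.
  have cvg_dom : (fun n => C%:E * nu (F n) + eps%:E)%E @ \oo -->
                 (C%:E * nu (\bigcap_n F n) + eps%:E)%E.
    apply: cvgeD; [by rewrite fin_num_adde_defl | | exact: cvg_cst].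
    exact/cvgeZl/(nonincreasing_cvg_mu nuF0 mF mI monoF).
  split=> //; apply: cvge_to_ge cvg_dom _; apply: nearW => n /=.
  apply: le_trans (domF n).2.
  by rewrite le_measure ?inE //; exact: bigcap_inf.
Qed.

Lemma abs_continuous_of_affine_domination (Alg : set (set T)) :
  setring Alg -> Alg `<=` measurable ->
  (forall eps, 0 < eps -> exists2 C, 0 <= C &
     forall A, Alg A -> (mu A <= C%:E * nu A + eps%:E)%E) ->
  forall A, <<sr Alg>> A -> nu A = 0%E -> mu A = 0%E.
Proof.
move=> ringAlg mAlg dom A AlgA nuA0; apply/eqP; rewrite eq_le measure_ge0 andbT.
apply/lee_addgt0Pr => eps eps0; rewrite add0e.
have [C C0 domC] := dom eps eps0.
have [_ +] := monotone_setring_sub_g_sigma_ring (affinely_dominated_monotone eps C0)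
  ringAlg (fun B AlgB => conj (mAlg B AlgB) (domC B AlgB)) AlgA.
by rewrite nuA0 mule0 add0e.
Qed.

End affine_domination.

Lemma g_sigma_algebra_sub_sigma_ring (T : Type) (G Alg : set (set T)) :
  G `<=` Alg -> Alg setT -> <<s G>> `<=` <<sr Alg>>.
Proof.
move=> GAlg AlgT; apply: smallest_sub; last first.
  by move=> B GB; apply: sub_g_sigma_ring; exact: GAlg.
have [sr0 srD srU] := smallest_sigma_ring Alg.
split=> // B srB; apply: srD => //; exact: sub_g_sigma_ring.
Qed.

Section prefix_sets.
Variables (E : finType) (m : int).

Definition prefix (σ : Sigma E) (n : nat) : seq E :=
  [seq σ (m + k%:Z) | k <- iota 0 n].

Definition prefix_set (n : nat) (Q : pred (seq E)) : set (Sigma E) :=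
  [set σ | Q (prefix σ n)].

Definition cylinder_algebra : set (set (Sigma E)) :=
  [set A | exists n Q, (0 < n)%N /\ A = prefix_set n Q].

Lemma size_prefix σ n : size (prefix σ n) = n.
Proof. by rewrite size_map size_iota. Qed.

Lemma take_prefix σ n n' : (n <= n')%N -> take n (prefix σ n') = prefix σ n.
Proof. by move=> le_nn'; rewrite /prefix -map_take take_iota (minn_idPl le_nn'). Qed.

Lemma prefix_set_widen n n' Q : (n <= n')%N ->
  prefix_set n Q = prefix_set n' (fun s => Q (take n s)).
Proof.
by move=> le_nn'; apply/seteqP; split => σ; rewrite /prefix_set /= take_prefix.
Qed.

Lemma cyl_iff_prefix σ s : cyl m s σ <-> prefix σ (size s) = s.
Proof.
split=> [cyl_s | prefix_s k lt_ks].
- apply: (@eq_from_nth _ (σ m)); rewrite ?size_prefix // => k lt_ks.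
  rewrite (nth_map 0%N) ?size_iota // nth_iota // add0n (cyl_s k lt_ks).
  exact: set_nth_default.
- have := congr1 (fun t => nth (σ (m + k%:Z)) t k) prefix_s.
  by rewrite /= (nth_map 0%N) ?size_iota ?nth_iota //= add0n.
Qed.

Lemma cylinder_algebraT : cylinder_algebra setT.
Proof. by exists 1%N, xpredT; split => //; apply/seteqP; split. Qed.

Lemma setring_cylinder_algebra : setring cylinder_algebra.
Proof.
have common n n' Q Q' : exists Q1 Q1', prefix_set n Q = prefix_set (maxn n n') Q1 /\
    prefix_set n' Q' = prefix_set (maxn n n') Q1'.
  by do 2!eexists; split; apply: prefix_set_widen; rewrite ?leq_maxl ?leq_maxr.
split.
- by exists 1%N, xpred0; split => //; apply/seteqP; split.
- move=> _ _ [n [Q [n0 ->]]] [n' [Q' [_ ->]]].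
  have [Q1 [Q1' [-> ->]]] := common n n' Q Q'.
  exists (maxn n n'), (fun s => Q1 s || Q1' s); split; first by rewrite leq_max n0.
  apply/seteqP; split => σ; rewrite /prefix_set /=; first by case=> ->; rewrite ?orbT.
  by case/orP; [left|right].
- move=> _ _ [n [Q [n0 ->]]] [n' [Q' [_ ->]]].
  have [Q1 [Q1' [-> ->]]] := common n n' Q Q'.
  exists (maxn n n'), (fun s => Q1 s && ~~ Q1' s); split; first by rewrite leq_max n0.
  apply/seteqP; split => σ; rewrite /prefix_set /=; first by case=> -> /negP ->.
  by case/andP => -> /negP.
Qed.

Lemma cylinders_sub_cylinder_algebra : @cylinders E m `<=` cylinder_algebra.
Proof.
move=> _ [s [s0 ->]]; exists (size s), (pred1 s); split => //.
apply/seteqP; split => σ; rewrite /prefix_set /=; first by move/cyl_iff_prefix ->.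
by move/eqP/cyl_iff_prefix.
Qed.

Fixpoint words (n : nat) : seq (seq E) :=
  if n is n'.+1 then [seq e :: t | e <- index_enum E, t <- words n'] else [:: [::]].

Lemma mem_words n s : (s \in words n) = (size s == n).
Proof.
elim: n s => [|n IH] [|e s] //=.
- by apply/negbTE/allpairsP => -[[e' t] [_ _ //]].
- rewrite eqSS -IH; apply/allpairsP/idP => [[[e' t] [_ ? [_ ->]]] // | s_n].
  by exists (e, s); rewrite mem_index_enum.
Qed.

Lemma uniq_words n : uniq (words n).
Proof.
elim: n => //= n IH; apply: allpairs_uniq => //; first exact: index_enum_uniq.
by move=> [e1 t1] [e2 t2] _ _ /= [-> ->].
Qed.

Lemma prefix_set_bigsetU n Q :
  prefix_set n Q = \big[setU/set0]_(s <- words n | Q s) cyl m s.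
Proof.
rewrite -bigcup_seq_cond; apply/seteqP; split => σ; rewrite /prefix_set /=.
- move=> Qσ; exists (prefix σ n); first by rewrite /= mem_words size_prefix eqxx.
  by apply/cyl_iff_prefix; rewrite size_prefix.
- by move=> [s /andP[+ Qs] /cyl_iff_prefix]; rewrite mem_words => /eqP -> ->.
Qed.

Lemma cyl_words_inj n s t σ : s \in words n -> t \in words n ->
  cyl m s σ -> cyl m t σ -> s = t.
Proof.
rewrite !mem_words => /eqP s_n /eqP t_n /cyl_iff_prefix <- /cyl_iff_prefix <-.
by rewrite s_n t_n.
Qed.

End prefix_sets.

(* A copy of [Sigma E] pointed at the constant sequence [e0], so that it can
   carry the measurable structure generated by the cylinders. *)
Definition pointed_Sigma {E : finType} (e0 : E) := Sigma E.
HB.instance Definition _ (E : finType) (e0 : E) :=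
  Choice.copy (pointed_Sigma e0) (int -> E).
HB.instance Definition _ (E : finType) (e0 : E) :=
  isPointed.Build (pointed_Sigma e0) (fun _ => e0).

Notation cylinder_space e0 m :=
  (g_sigma_algebraType (@cylinders _ m : set (set (pointed_Sigma e0)))).

(* The unused argument [mu_prob] is what the [isMeasure] instance below is built
   from: canonical structure inference can then find it from the term alone. *)
Definition measure_of_probability (R : realType) (E : finType) (e0 : E) (m : int)
    (mu : set (Sigma E) -> \bar R) (mu_prob : is_probability_on (A_sigma m) mu) :
    set (cylinder_space e0 m) -> \bar R :=
  fun A => if pselect (A_sigma m A) then mu A else 0%E.
Arguments measure_of_probability {R E} e0 {m mu} mu_prob.

Section measure_of_probability.
Variables (R : realType) (E : finType) (e0 : E) (m : int).
Variables (mu : set (Sigma E) -> \bar R) (mu_prob : is_probability_on (A_sigma m) mu).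

Lemma measure_of_probabilityE A :
  A_sigma m A -> measure_of_probability e0 mu_prob A = mu A.
Proof. by rewrite /measure_of_probability; case: pselect. Qed.

Let measure_of_probability0 : measure_of_probability e0 mu_prob set0 = 0%E.
Proof. by rewrite /measure_of_probability; case: pselect => // ?; case: mu_prob. Qed.

Let measure_of_probability_ge0 A : (0 <= measure_of_probability e0 mu_prob A)%E.
Proof.
rewrite /measure_of_probability; case: pselect => // mA.
by case: mu_prob => _ + _ _; apply.
Qed.

Let measure_of_probability_sigma_additive :
  semi_sigma_additive (measure_of_probability e0 mu_prob).
Proof.
move=> F mF tF mU; rewrite measure_of_probabilityE //.
have -> : (fun n => \sum_(0 <= i < n) measure_of_probability e0 mu_prob (F i))%E =
          (fun n => \sum_(0 <= i < n) mu (F i))%E.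
  apply/funext => n; apply: eq_bigr => i _.
  by rewrite measure_of_probabilityE //; exact: mF.
by case: mu_prob => _ _ _; apply.
Qed.

HB.instance Definition _ := isMeasure.Build _ _ _ (measure_of_probability e0 mu_prob)
  measure_of_probability0 measure_of_probability_ge0
  measure_of_probability_sigma_additive.

End measure_of_probability.
Arguments measure_of_probabilityE {R E} e0 {m mu} mu_prob {A}.

Lemma measure_bigsetU_uniq {R : realType} {d : measure_display} {T : measurableType d}
    (mu : {measure set T -> \bar R}) (I : eqType) (r : seq I) (P : pred I)
    (F : I -> set T) :
  uniq r -> (forall i, i \in r -> measurable (F i)) ->
  {in r &, forall i j, i != j -> F i `&` F j = set0} ->
  mu (\big[setU/set0]_(i <- r | P i) F i) = (\sum_(i <- r | P i) mu (F i))%E.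
Proof.
elim: r => [|i r IH]; first by rewrite !big_nil measure0.
move=> /= /andP[i_r uniq_r] mF disjF; rewrite !big_cons.
have mFr j : j \in r -> measurable (F j) by move=> jr; apply: mF; rewrite inE jr orbT.
have disjFr : {in r &, forall j k, j != k -> F j `&` F k = set0}.
  by move=> j k jr kr; apply: disjF; rewrite inE ?jr ?kr orbT.
have IHr := IH uniq_r mFr disjFr.
case: ifP => // Pi; rewrite measureU.
- by congr (_ + _)%E; exact: IHr.
- exact/mF/mem_head.
- by rewrite big_seq_cond; apply: bigsetU_measurable => j /andP[/mFr].
rewrite big_distrr /= big1_seq // => j /andP[_ jr].
apply: disjF; rewrite ?inE ?eqxx ?jr ?orbT //.
by apply: contraNneq i_r => ->.
Qed.

Section prefix_measures.
Variables (R : realType) (E : finType) (e0 : E) (m : int).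

Lemma cyl_measurable (s : seq E) : (0 < size s)%N -> A_sigma m (cyl m s).
Proof. by move=> s0; apply: sub_gen_smallest; exists s. Qed.

Lemma cylinder_algebra_sub_A_sigma : @cylinder_algebra E m `<=` A_sigma m.
Proof.
move=> _ [n [Q [n0 ->]]]; rewrite prefix_set_bigsetU big_seq_cond.
apply: (@bigsetU_measurable _ (cylinder_space e0 m)) => s /andP[+ _].
by rewrite mem_words => /eqP s_n; apply: cyl_measurable; rewrite s_n.
Qed.

Lemma probability_prefix_set (mu : set (Sigma E) -> \bar R) n Q :
  is_probability_on (A_sigma m) mu -> (0 < n)%N ->
  mu (prefix_set m n Q) = (\sum_(s <- words E n | Q s) mu (cyl m s))%E.
Proof.
move=> mu_prob n0.
pose MU : {measure set (cylinder_space e0 m) -> \bar R} :=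
  measure_of_probability e0 mu_prob.
have MUE B : A_sigma m B -> MU B = mu B := measure_of_probabilityE e0 mu_prob.
rewrite -MUE; last by apply: cylinder_algebra_sub_A_sigma; exists n, Q.
rewrite prefix_set_bigsetU measure_bigsetU_uniq.
- rewrite big_seq_cond [RHS]big_seq_cond; apply: eq_bigr => s /andP[+ _].
  by rewrite mem_words => /eqP s_n; rewrite MUE //; apply: cyl_measurable; rewrite s_n.
- exact: uniq_words.
- by move=> s; rewrite mem_words => /eqP s_n; apply: cyl_measurable; rewrite s_n.
move=> s t s_n t_n /eqP st; apply/seteqP; split => // σ [cyl_s cyl_t].
exact/st/(cyl_words_inj s_n t_n cyl_s cyl_t).
Qed.

Lemma abs_continuous_on_of_prefix_domination (mu nu : set (Sigma E) -> \bar R) :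
  is_probability_on (A_sigma m) mu -> is_probability_on (A_sigma m) nu ->
  (forall eps, 0 < eps -> exists2 C, 0 <= C & forall n Q, (0 < n)%N ->
     (mu (prefix_set m n Q) <= C%:E * nu (prefix_set m n Q) + eps%:E)%E) ->
  abs_continuous_on (A_sigma m) mu nu.
Proof.
move=> mu_prob nu_prob dom A mA nuA0.
pose MU : {measure set (cylinder_space e0 m) -> \bar R} :=
  measure_of_probability e0 mu_prob.
pose NU : {measure set (cylinder_space e0 m) -> \bar R} :=
  measure_of_probability e0 nu_prob.
have MUE B : A_sigma m B -> MU B = mu B := measure_of_probabilityE e0 mu_prob.
have NUE B : A_sigma m B -> NU B = nu B := measure_of_probabilityE e0 nu_prob.
have algE := @cylinder_algebra_sub_A_sigma.
rewrite -MUE //; apply: (abs_continuous_of_affine_domination (nu := NU) _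
  (@setring_cylinder_algebra E m)).
- rewrite NUE; last exact: (@measurableT _ (cylinder_space e0 m)).
  by have [_ _ -> _] := nu_prob; rewrite ltry.
- exact: algE.
- move=> eps eps0; have [C C0 domC] := dom eps eps0; exists C => // _ [n [Q [n0 ->]]].
  by rewrite MUE ?NUE ?domC //; apply: algE; exists n, Q.
- apply: g_sigma_algebra_sub_sigma_ring mA.
  + exact: cylinders_sub_cylinder_algebra.
  + exact: cylinder_algebraT.
by rewrite NUE.
Qed.

End prefix_measures.

(* The integral is a supremum over simple functions below the integrand, so no
   measurability is needed. *)
Lemma ge0_le_integral_nonmeasurable (R : realType) (d : measure_display)
    (T : measurableType d) (mu : {measure set T -> \bar R}) (D : set T)
    (f g : T -> \bar R) :
  (forall x, D x -> (0 <= f x)%E) -> (forall x, D x -> (f x <= g x)%E) ->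
  (\int[mu]_(x in D) f x <= \int[mu]_(x in D) g x)%E.
Proof.
move=> f0 fg; have g0 x : D x -> (0 <= g x)%E.
  by move=> Dx; exact: le_trans (f0 x Dx) (fg x Dx).
rewrite !ge0_integralE //=.
apply: ereal_sup_le => _ [h /= hf <-]; exists h => //= x.
by apply: le_trans (hf x) _; rewrite /patch; case: ifP => // /set_mem /fg.
Qed.

Section dini_geometric.
Variables (R : realType) (mo : R -> \bar R) (b c : R).
Hypotheses (b0 : 0 < b) (b1 : b < 1) (c0 : 0 < c).
Hypothesis mo_ge0 : forall t, 0 <= t -> (0 <= mo t)%E.
Hypothesis mo_fin : forall t, 0 <= t -> mo t \is a fin_num.
Hypothesis mo_nd : forall t1 t2, 0 <= t1 -> t1 <= t2 -> (mo t1 <= mo t2)%E.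

Let ck k := c * b ^+ k.
Let A k := `]ck k.+1, ck k]%classic.
(* On [A k] the integrand [mo t / t] is at least [height k], and the [A k] are
   disjoint subintervals of [`]0, c]]. *)
Let height k := fine (mo (ck k.+1)) / ck k.

Let ck_gt0 k : 0 < ck k. Proof. by rewrite mulr_gt0 // exprn_gt0. Qed.
Let ckS k : ck k.+1 = ck k * b. Proof. by rewrite /ck exprSr mulrA. Qed.
Let ck_lt k : ck k.+1 < ck k. Proof. by rewrite ckS gtr_pMr. Qed.
Let ck_le k l : (k <= l)%N -> ck l <= ck k.
Proof. by move=> kl; rewrite ler_pM2l // ler_wiXn2l // ltW. Qed.

Let fine_mo_ge0 t : 0 <= t -> 0 <= fine (mo t).
Proof. by move=> t0; rewrite fine_ge0 ?mo_ge0. Qed.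

Let height_ge0 k : 0 <= height k.
Proof. by rewrite divr_ge0 ?fine_mo_ge0 // ltW. Qed.

Let A_sub k : A k `<=` `]0, c]%classic.
Proof.
move=> t; rewrite /A /= !in_itv /= => /andP[t_gt t_le]; apply/andP; split.
  exact: lt_trans (ck_gt0 _) t_gt.
by apply: le_trans t_le _; have := ck_le (leq0n k); rewrite /ck expr0 mulr1.
Qed.

Let A_disj k l t : (k < l)%N -> t \in A k -> t \in A l -> False.
Proof.
rewrite !mem_setE !in_itv /= => kl /andP[tk _] /andP[_ tl].
by have := ck_le kl; lra.
Qed.

Let sum_indic_A_le1 n t : \sum_(k < n) \1_(A k) t <= 1 :> R.
Proof.
have [[k0 tk0]|none] := pselect (exists k : 'I_n, t \in A k); last first.
  rewrite big1 // => k _; rewrite indicE.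
  by case: (boolP (t \in A k)) => // tk; case: none; exists k.
rewrite (bigD1 k0) //= indicE tk0 big1 ?addr0 // => k k_k0.
rewrite indicE; case: (boolP (t \in A k)) => // tk; exfalso.
case: (ltngtP k k0) => [kk0|k0k|/val_inj kk0]; last by rewrite kk0 eqxx in k_k0.
- exact: A_disj kk0 tk tk0.
- exact: A_disj k0k tk0 tk.
Qed.

Let integral_step n :
  (\int[@lebesgue_measure R]_(t in `]0%R, c]) (\sum_(k < n) (height k * \1_(A k) t)%:E) =
   (\sum_(k < n) fine (mo (ck k.+1)) * (1 - b))%:E)%E.
Proof.
rewrite ge0_integral_sum //; first last.
- by move=> k t _; rewrite lee_fin mulr_ge0.
- move=> k; apply/measurable_realfun.measurable_EFinP.
  apply: measurable_realfun.measurable_funM; first exact: measurable_cst.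
  by apply: measurable_realfun.measurable_indic; exact: measurable_itv.
rewrite -sumEFin; apply: eq_bigr => k _.
have := @integralZl_indic _ _ _ (@lebesgue_measure R) _ (measurable_itv `]0%R, c])
  (fun=> A k) (height k).
rewrite /= => ->; last 2 first.
- by rewrite ltNge height_ge0.
- exact: measurable_itv.
rewrite integral_indic ?setIidl; [|exact: A_sub|exact: measurable_itv..].
have lebA : (@lebesgue_measure R (A k) = (ck k - ck k.+1)%:E)%E.
  by rewrite /A lebesgue_measure_itv /= lte_fin ck_lt.
transitivity ((height k)%:E * (ck k - ck k.+1)%:E)%E; first exact: congr1 lebA.
rewrite -EFinM /height ckS; congr (_%:E).
by field; rewrite gt_eqF.
Qed.

Let step_le n t : 0 < t ->
  \sum_(k < n) height k * \1_(A k) t <= fine (mo t) / t.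
Proof.
move=> t0; have q0 : 0 <= fine (mo t) / t by rewrite divr_ge0 ?fine_mo_ge0 ?ltW.
apply: le_trans (_ : \sum_(k < n) fine (mo t) / t * \1_(A k) t <= _).
  apply: ler_sum => k _; rewrite indicE.
  case: (boolP (t \in A k)) => [|_]; rewrite ?mulr0 // !mulr1.
  rewrite mem_setE in_itv /= => /andP[tk tk'].
  have ck0 := ltW (ck_gt0 k.+1).
  apply: ler_pM; rewrite ?invr_ge0 ?fine_mo_ge0 ?(ltW (ck_gt0 _)) ?lef_pV2 ?posrE //.
  apply: fine_le; [exact: mo_fin ck0 | exact: mo_fin (ltW t0) |].
  exact: mo_nd ck0 (ltW tk).
by rewrite -mulr_sumr ler_piMr // sum_indic_A_le1.
Qed.

Lemma dini_geometric_sum :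
  let I := (\int[@lebesgue_measure R]_(t in `]0%R, c]) (mo t * (t^-1)%:E))%E in
  (I < +oo)%E ->
  forall n, (1 - b) * \sum_(k < n) fine (mo (c * b ^+ k.+1)) <= fine I.
Proof.
move=> I Ifin n; have I0 : (0 <= I)%E.
  apply: integral_ge0 => t /=; rewrite in_itv /= => /andP[t0 _].
  by apply: mule_ge0; [exact: mo_ge0 (ltW t0) | rewrite lee_fin invr_ge0 ltW].
rewrite -lee_fin fineK ?ge0_fin_numE // mulr_sumr.
under eq_bigr do rewrite mulrC.
rewrite -integral_step; apply: ge0_le_integral_nonmeasurable => t.
  by move=> _; rewrite sumEFin lee_fin sumr_ge0 // => k _; rewrite mulr_ge0.
rewrite /= in_itv /= => /andP[t0 _].
by rewrite sumEFin -(fineK (mo_fin (ltW t0))) -EFinM lee_fin step_le.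
Qed.

End dini_geometric.

Section modulus.
Variables (R : realType) (K : Type) (d : K -> K -> R) (A : set K) (f : K -> R).

Lemma modulus_ge x y t : A x -> A y -> d x y <= t ->
  (`|f x - f y|%:E <= modulus d A f t)%E.
Proof. by move=> Ax Ay dxy; apply: ereal_sup_ubound; exists x, y. Qed.

Lemma modulus_le t M : (forall x y, A x -> A y -> `|f x - f y| <= M) ->
  (modulus d A f t <= M%:E)%E.
Proof.
by move=> fM; apply: ge_ereal_sup => _ [x [y [Ax Ay _ ->]]]; rewrite lee_fin fM.
Qed.

Lemma le_modulus t1 t2 : t1 <= t2 -> (modulus d A f t1 <= modulus d A f t2)%E.
Proof.
move=> t12; apply: ereal_sup_le => _ [x [y [Ax Ay dxy ->]]].
by exists x, y; split => //; apply: le_trans t12.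
Qed.

Lemma modulus_ge0 x t : A x -> d x x <= t -> (0 <= modulus d A f t)%E.
Proof. by move=> Ax dxx; have := modulus_ge Ax Ax dxx; rewrite subrr normr0. Qed.

End modulus.

Section path_mean.
Variables (R : realType) (E : finType) (K : Type) (w : E -> K -> K) (p : E -> K -> R).

Fixpoint path_mean (n : nat) (z : K) (f : seq E -> R) : R :=
  if n is n'.+1 then \sum_(e : E) p e z * path_mean n' (w e z) (fun s => f (e :: s))
  else f [::].

Lemma path_mean_words n z f :
  path_mean n z f = \sum_(s <- words E n) cylP w p z s * f s.
Proof.
elim: n z f => [|n IH] z f /=; first by rewrite big_cons big_nil mul1r addr0.
rewrite big_allpairs_dep /=; apply: eq_bigr => e _.
by rewrite IH mulr_sumr; apply: eq_bigr => s _; rewrite mulrA.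
Qed.

Lemma path_meanD n z f g :
  path_mean n z (fun s => f s + g s) = path_mean n z f + path_mean n z g.
Proof.
elim: n z f g => //= n IH z f g.
by rewrite -big_split /=; apply: eq_bigr => e _; rewrite IH mulrDr.
Qed.

Lemma path_meanZ n z c f : path_mean n z (fun s => c * f s) = c * path_mean n z f.
Proof.
elim: n z f => //= n IH z f.
by rewrite mulr_sumr; apply: eq_bigr => e _; rewrite IH mulrCA.
Qed.

Hypothesis p_ge0 : forall e z, 0 <= p e z.

Lemma le_path_mean n z f g : (forall s, f s <= g s) -> path_mean n z f <= path_mean n z g.
Proof.
elim: n z f g => [|n IH] z f g fg //=; apply: ler_sum => e _.
by apply: ler_wpM2l => //; apply: IH.
Qed.

Lemma path_mean_ge0 n z f : (forall s, 0 <= f s) -> 0 <= path_mean n z f.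
Proof.
elim: n z f => [|n IH] z f f0 //=; apply: sumr_ge0 => e _.
by apply: mulr_ge0 => //; apply: IH.
Qed.

Hypothesis p_sum1 : forall z, \sum_(e : E) p e z = 1.

Lemma path_mean_cst n z c : path_mean n z (fun _ => c) = c.
Proof.
elim: n z => //= n IH z.
by under eq_bigr => e _ do rewrite IH; rewrite -mulr_suml p_sum1 mul1r.
Qed.

End path_mean.
Arguments le_path_mean {R E K w p} p_ge0 {n z f g}.
Arguments path_mean_ge0 {R E K w p} p_ge0 {n z f}.
Arguments path_mean_cst {R E K w p} p_sum1 n z c.

Lemma probability_prefix_set_path_mean (R : realType) (E : finType) (K : Type)
    (w : E -> K -> K) (p : E -> K -> R) (e0 : E) (m : int)
    (mu : set (Sigma E) -> \bar R) (z : K) n (Q : pred (seq E)) :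
  is_probability_on (A_sigma m) mu ->
  (forall s, (0 < size s)%N -> mu (cyl m s) = (cylP w p z s)%:E) -> (0 < n)%N ->
  mu (prefix_set m n Q) = (path_mean w p n z (fun s => (Q s)%:R))%:E.
Proof.
move=> mu_prob mu_cyl n0; rewrite (probability_prefix_set e0) // path_mean_words.
rewrite -sumEFin big_mkcond /=; apply: eq_big_seq => s; rewrite mem_words => /eqP s_n.
by rewrite mu_cyl ?s_n //; case: (Q s); rewrite ?mulr1 ?mulr0.
Qed.

Lemma finite_pos_lower_bound (R : realType) (I : finType) (f : I -> R) :
  (forall i, 0 < f i) -> exists2 c, 0 < c & forall i, c <= f i.
Proof.
move=> f0; exists (\big[Order.min/1]_i f i); last by move=> i; exact: bigmin_le.
by elim/big_ind: _ => // u v u0 v0; rewrite lt_min u0.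
Qed.

Section cms.
Variables (R : realType) (N : nat) (E : finType) (ini ter : E -> 'I_N)
  (K : Type) (d : K -> K -> R) (Kp : 'I_N -> set K)
  (w : E -> K -> K) (p : E -> K -> R) (a : R).
Hypothesis cms : is_CMS ini ter d Kp w p a.

Lemma cms_p_ge0 e z : 0 <= p e z.
Proof. by case: cms => _ _ _ [_ + _ _] _; apply. Qed.

Lemma cms_p_sum1 z : \sum_(e : E) p e z = 1.
Proof. by case: cms => _ _ _ [_ _ + _] _; apply. Qed.

Lemma cms_p_out e z : ~ Kp (ini e) z -> p e z = 0.
Proof. by case: cms => _ _ _ [_ _ _ +] _; apply. Qed.

Lemma cms_p_le1 e z : p e z <= 1.
Proof.
rewrite -(cms_p_sum1 z) (bigD1 e) //= lerDl sumr_ge0 // => *; exact: cms_p_ge0.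
Qed.

Lemma cms_dist_p_le1 e x y : `|p e x - p e y| <= 1.
Proof.
have := cms_p_ge0 e x; have := cms_p_ge0 e y.
have := cms_p_le1 e x; have := cms_p_le1 e y.
by rewrite ler_norml => *; apply/andP; split; lra.
Qed.

Lemma cms_w e z : Kp (ini e) z -> Kp (ter e) (w e z).
Proof. by case: cms => _ _ [_ wKp] _ _ ez; apply: wKp; exists z. Qed.

Lemma cms_Kp_inj i j z : Kp i z -> Kp j z -> i = j.
Proof.
case: cms => _ [_ disj _ _] _ _ _ iz jz; apply/eqP/negPn/negP => /disj ij.
by have : (Kp i `&` Kp j) z by [split]; rewrite ij.
Qed.

Lemma cms_Kp_cover z : exists j, Kp j z.
Proof. by case: cms => _ [_ _ + _] _ _ _; apply. Qed.

Lemma cms_Kp_neq0 i : Kp i !=set0.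
Proof. by case: cms => _ [+ _ _ _] _ _ _; apply. Qed.

Lemma cms_contract j x y : Kp j x -> Kp j y ->
  \sum_(e : E) p e x * d (w e x) (w e y) <= a * d x y.
Proof. by case: cms => _ _ _ _ [_]; apply. Qed.

Lemma cms_d_ge0 x y : 0 <= d x y.
Proof. by case: cms => [[[+ _ _ _] _] _ _ _ _]; apply. Qed.

Lemma cms_d_xx x : d x x = 0.
Proof. by case: cms => [[[_ d0 _ _] _] _ _ _ _]; apply/d0. Qed.

Lemma cms_a : 0 < a < 1.
Proof. by case: cms => _ _ _ _ []. Qed.

Let modulus_p e t := modulus d (Kp (ini e)) (p e) t.

Lemma cms_modulus_ge0 e t : 0 <= t -> (0 <= modulus_p e t)%E.
Proof.
move=> t0; have [x Kx] := cms_Kp_neq0 (ini e).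
by apply: modulus_ge0 Kx _; rewrite cms_d_xx.
Qed.

Lemma cms_modulus_fin_num e t : 0 <= t -> modulus_p e t \is a fin_num.
Proof.
move=> t0; rewrite ge0_fin_numE ?cms_modulus_ge0 //.
apply: le_lt_trans (modulus_le d t (fun x y _ _ => cms_dist_p_le1 e x y)) _.
by rewrite ltry.
Qed.

Definition modulus_sum t := \sum_(e : E) fine (modulus_p e t).

Lemma modulus_sum_ge e t : 0 <= t -> (modulus_p e t <= (modulus_sum t)%:E)%E.
Proof.
move=> t0; rewrite -(fineK (cms_modulus_fin_num e t0)) lee_fin /modulus_sum.
rewrite (bigD1 e) //= lerDl sumr_ge0 // => e' _.
by rewrite -lee_fin fineK ?cms_modulus_ge0 ?cms_modulus_fin_num.
Qed.

(* Either [d x y <= t] and the modulus at [t] applies, or [d x y / t >= 1]. *)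
Lemma cms_dist_p_le_modulus e t x y : 0 < t -> Kp (ini e) x -> Kp (ini e) y ->
  `|p e x - p e y| <= modulus_sum t + d x y / t.
Proof.
move=> t0 ex ey; have S0 : 0 <= modulus_sum t.
  rewrite -lee_fin; apply: le_trans (modulus_sum_ge e (ltW t0)).
  exact: cms_modulus_ge0 (ltW t0).
have dt0 : 0 <= d x y / t by rewrite divr_ge0 ?cms_d_ge0 ?ltW.
case: (leP (d x y) t) => dxy.
  have := le_trans (modulus_ge (p e) ex ey dxy) (modulus_sum_ge e (ltW t0)).
  by rewrite lee_fin; lra.
have : 1 <= d x y / t by rewrite ler_pdivlMr // mul1r ltW.
by have := cms_dist_p_le1 e x y; lra.
Qed.

Hypothesis dini : forall e, dini_continuous d (Kp (ini e)) (p e).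

Lemma modulus_sum_geometric_bounded b : 0 < b < 1 ->
  exists2 c, 0 < c & exists B, forall n,
    \sum_(k < n) modulus_sum (c * b ^+ k.+1) <= B.
Proof.
case/andP=> b0 b1.
have dini_e e : exists cB : R * R, 0 < cB.1 /\ forall n,
    \sum_(k < n) fine (modulus d (Kp (ini e)) (p e) (cB.1 * b ^+ k.+1)) <= cB.2.
  have [c [c0 Ifin]] := dini e.
  exists (c, fine (\int[@lebesgue_measure R]_(t in `]0%R, c])
    (modulus d (Kp (ini e)) (p e) t * (t^-1)%:E))%E / (1 - b)); split => // n /=.
  rewrite ler_pdivlMr ?subr_gt0 // mulrC.
  apply: dini_geometric_sum => //.
  - exact: cms_modulus_ge0.
  - exact: cms_modulus_fin_num.
  - by move=> t1 t2 _; exact: le_modulus.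
have [cB /all_and2[cB0 cB_sum]] := choice dini_e.
have [c c0 c_le] := finite_pos_lower_bound cB0.
exists c => //; exists (\sum_(e : E) (cB e).2) => n.
rewrite exchange_big /=; apply: ler_sum => e _; apply: le_trans (cB_sum e n).
apply: ler_sum => k _; rewrite -lee_fin !fineK ?cms_modulus_fin_num //.
- by apply: le_modulus; rewrite ler_pM2r ?exprn_gt0 ?c_le.
- by rewrite mulr_ge0 ?exprn_ge0 ?ltW.
- by rewrite mulr_ge0 ?exprn_ge0 ?ltW.
Qed.

(* Bounds [ln (cylP w p x s / cylP w p y s)] for [x], [y] in a common part,
   see [p_le_expR_variation]. *)
Fixpoint variation (δ : R) (x y : K) (s : seq E) : R :=
  if s is e :: s' then `|p e x - p e y| / δ + variation δ (w e x) (w e y) s' else 0.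

Lemma variation_ge0 δ x y s : 0 < δ -> 0 <= variation δ x y s.
Proof.
move=> δ0; elim: s x y => //= e s IH x y.
by rewrite addr_ge0 // divr_ge0 // ltW.
Qed.

Variables (δ : R) (δ0 : 0 < δ).
Hypothesis p_ge_δ : forall e z, Kp (ini e) z -> δ <= p e z.

Lemma p_le_expR_variation e x y : Kp (ini e) y ->
  p e x <= p e y * expR (`|p e x - p e y| / δ).
Proof.
move=> ey; set u := `|p e x - p e y| / δ.
have pxy : p e x <= p e y + δ * u.
  by rewrite /u mulrC divfK ?gt_eqF // -lerBlDl ler_norm.
have u0 : 0 <= u by rewrite divr_ge0 // ltW.
have := expR_ge1Dx u; have := p_ge_δ ey; have := cms_p_ge0 e y; nra.
Qed.

Lemma path_mean_variation_le_expR n j x y (L : R) (g : seq E -> R) :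
  Kp j x -> Kp j y -> (forall s, 0 <= g s) ->
  path_mean w p n x (fun s => (variation δ x y s <= L)%R%:R * g s) <=
    expR L * path_mean w p n y g.
Proof.
elim: n j x y L g => [|n IH] j x y L g jx jy g0 /=.
  have [L0|] := leP 0 L; last by rewrite mul0r mulr_ge0 ?expR_ge0.
  by rewrite mul1r ler_peMl // -expR0 ler_expR.
rewrite mulr_sumr; apply: ler_sum => e _.
have [ex|/cms_p_out->] := pselect (Kp (ini e) x); last first.
  rewrite mul0r; apply: mulr_ge0 (expR_ge0 _) (mulr_ge0 (cms_p_ge0 _ _) _).
  by apply: (path_mean_ge0 cms_p_ge0) => s; exact: g0.
have ey : Kp (ini e) y by rewrite -(cms_Kp_inj jx ex).
set u := `|p e x - p e y| / δ.
under eq_fun => s do rewrite -lerBrDl.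
apply: le_trans (ler_wpM2l (cms_p_ge0 e x)
  (IH _ _ _ (L - u) _ (cms_w ex) (cms_w ey) (fun s => g0 _))) _.
rewrite !mulrA ler_wpM2r //; first by apply: (path_mean_ge0 cms_p_ge0) => s; exact: g0.
rewrite expRD expRN mulrCA.
rewrite ler_pM2l ?expR_gt0 // ler_pdivrMr ?expR_gt0 //.
exact: p_le_expR_variation.
Qed.

Lemma path_mean_variation_le n j x y (τ : nat -> R) : Kp j x -> Kp j y ->
  (forall k, 0 < τ k) ->
  δ * path_mean w p n x (variation δ x y) <=
    \sum_(k < n) modulus_sum (τ k) + d x y * \sum_(k < n) a ^+ k / τ k.
Proof.
elim: n j x y τ => [|n IH] j x y τ jx jy τ0 /=.
  by rewrite !big_ord0 !mulr0 addr0.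
set S := \sum_(k < n) a ^+ k / τ k.+1.
set B := \sum_(k < n) modulus_sum (τ k.+1).
have S0 : 0 <= S.
  by rewrite sumr_ge0 // => k _; rewrite divr_ge0 ?exprn_ge0 ?ltW //; case/andP: cms_a.
have step e :
    δ * (p e x * path_mean w p n (w e x) (fun s => variation δ x y (e :: s))) <=
    p e x * (modulus_sum (τ 0%N) + d x y / τ 0%N + B + d (w e x) (w e y) * S).
  have [ex|/cms_p_out->] := pselect (Kp (ini e) x); last by rewrite !mul0r mulr0.
  have ey : Kp (ini e) y by rewrite -(cms_Kp_inj jx ex).
  rewrite /= path_meanD (path_mean_cst cms_p_sum1) mulrCA ler_wpM2l ?cms_p_ge0 //.
  rewrite mulrDr [δ * (_ / δ)]mulrC divfK ?gt_eqF //.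
  have := cms_dist_p_le_modulus (τ0 0%N) ex ey.
  have := IH _ _ _ (fun k => τ k.+1) (cms_w ex) (cms_w ey) (fun k => τ0 k.+1).
  rewrite -/S -/B; lra.
rewrite mulr_sumr; apply: le_trans (ler_sum _ (fun e _ => step e)) _.
rewrite (eq_bigr (fun e => (modulus_sum (τ 0%N) + d x y / τ 0%N + B) * p e x +
    S * (p e x * d (w e x) (w e y)))); last by move=> e _; ring.
rewrite big_split /= -!mulr_sumr cms_p_sum1 mulr1 !big_ord_recl expr0 mul1r.
have -> : \sum_(k < n) modulus_sum (τ (lift ord0 k)) = B.
  by apply: eq_bigr => k _; rewrite lift0.
have -> : \sum_(k < n) a ^+ lift ord0 k / τ (lift ord0 k) = a * S.
  by rewrite mulr_sumr; apply: eq_bigr => k _; rewrite lift0 exprS mulrA.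
have := cms_contract jx jy; have := cms_d_ge0 x y; nra.
Qed.

Lemma path_mean_indicator_le n j x y (L : R) (Q : pred (seq E)) :
  Kp j x -> Kp j y -> 0 < L ->
  path_mean w p n x (fun s => (Q s)%:R) <=
    expR L * path_mean w p n y (fun s => (Q s)%:R) +
    path_mean w p n x (variation δ x y) / L.
Proof.
move=> jx jy L0; pose V s := variation δ x y s.
(* Paths with [V <= L]: ratio bound; the others: Markov's inequality. *)
pose g s := (V s <= L)%R%:R * (Q s)%:R + L^-1 * V s.
apply: le_trans (le_path_mean cms_p_ge0 (g := g) _) _.
  move=> s; have V0 : 0 <= V s by exact: variation_ge0.
  have LV0 : 0 <= L^-1 * V s by rewrite mulr_ge0 // invr_ge0 ltW.
  rewrite /g; case: (leP (V s) L) => VL; case: (Q s).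
  all: rewrite /= ?mul1r ?mul0r ?add0r ?lerDl //.
  by rewrite mulrC ler_pdivlMr // mul1r ltW.
rewrite path_meanD path_meanZ mulrC lerD2r.
exact: path_mean_variation_le_expR jx jy (fun s => ler0n _ _).
Qed.

Lemma path_mean_variation_bounded j x y : Kp j x -> Kp j y ->
  exists M, forall n, δ * path_mean w p n x (variation δ x y) <= M.
Proof.
move=> jx jy; have /andP[a0 a1] := cms_a.
(* Compare [x_k] and [y_k] at scale [c b^(k+1)] with [a < b < 1]: the moduli
   are summable by Dini continuity, the distances since [a / b < 1]. *)
pose b := (1 + a) / 2; have b0 : 0 < b by rewrite /b; lra.
have b1 : b < 1 by rewrite /b; lra.
have ab : a < b by rewrite /b; lra.
have [c c0 [B sumB]] : exists2 c, 0 < c & exists B, forall n,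
    \sum_(k < n) modulus_sum (c * b ^+ k.+1) <= B.
  by apply: modulus_sum_geometric_bounded; rewrite b0 b1.
pose q := a / b; have q0 : 0 < q by rewrite divr_gt0.
have q1 : `|q| < 1 by rewrite gtr0_norm // ltr_pdivrMr // mul1r.
exists (B + d x y * ((c * b)^-1 * (1 - q)^-1)) => n.
apply: le_trans (path_mean_variation_le n jx jy (τ := fun k => c * b ^+ k.+1) _) _.
  by move=> k; rewrite mulr_gt0 ?exprn_gt0.
rewrite lerD // ler_wpM2l ?cms_d_ge0 //.
rewrite (_ : \sum_(k < n) _ = series (geometric (c * b)^-1 q) n).
  by apply: geometric_le_lim; rewrite // invr_ge0 ltW // mulr_gt0.
rewrite /series /= big_mkord; apply: eq_bigr => k _.
rewrite /q exprSr (expr_div_n a b k).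
have bk : b ^+ k != 0 by rewrite gt_eqF ?exprn_gt0.
move: bk; set u := a ^+ k; set v := b ^+ k => bk; field.
by rewrite bk !gt_eqF.
Qed.

Lemma path_mean_indicator_domination j x y : Kp j x -> Kp j y ->
  forall eps, 0 < eps -> exists2 C, 0 <= C & forall n (Q : pred (seq E)),
    path_mean w p n x (fun s => (Q s)%:R) <=
      C * path_mean w p n y (fun s => (Q s)%:R) + eps.
Proof.
move=> jx jy eps eps0; have [M boundM] := path_mean_variation_bounded jx jy.
pose L := `|M| / (δ * eps) + 1.
have L0 : 0 < L.
  have : 0 <= `|M| / (δ * eps) by rewrite divr_ge0 // mulr_ge0 // ltW.
  by rewrite /L; lra.
exists (expR L); first exact: expR_ge0.
move=> n Q; apply: le_trans (path_mean_indicator_le n Q jx jy L0) _.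
rewrite lerD2l ler_pdivrMr //.
have V_le : path_mean w p n x (variation δ x y) <= `|M| / δ.
  by rewrite ler_pdivlMr // mulrC (le_trans (boundM n)) // ler_norm.
have -> : eps * L = `|M| / δ + eps by rewrite /L; field; rewrite !gt_eqF.
lra.
Qed.

Lemma cms_inhabited (z : K) : inhabited E.
Proof.
case: (pickP (xpredT : pred E)) => [e _|E0]; first by constructor.
by have := cms_p_sum1 z; rewrite big_pred0 // => /esym/eqP; rewrite oner_eq0.
Qed.

Lemma abs_continuous_on_same_part j x y (m : int)
    (P : K -> set (Sigma E) -> \bar R) :
  Kp j x -> Kp j y -> (forall z, is_probability_on (A_sigma m) (P z)) ->
  (forall z s, (0 < size s)%N -> P z (cyl m s) = (cylP w p z s)%:E) ->
  abs_continuous_on (A_sigma m) (P x) (P y).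
Proof.
move=> jx jy P_prob P_cyl; have [e0] := cms_inhabited x.
apply: (abs_continuous_on_of_prefix_domination e0) => // eps eps0.
have [C C0 domC] := path_mean_indicator_domination jx jy eps0.
exists C => // n Q n0.
rewrite (probability_prefix_set_path_mean e0 Q (P_prob x) (P_cyl x) n0).
rewrite (probability_prefix_set_path_mean e0 Q (P_prob y) (P_cyl y) n0).
by rewrite -EFinM -EFinD lee_fin.
Qed.

End cms.

Lemma sume_avg_eq0 (R : realType) (N : nat) (f : 'I_N -> \bar R) j :
  (forall i, 0 <= f i)%E -> ((N%:R)^-1%:E * \sum_(i < N) f i = 0)%E -> f j = 0%E.
Proof.
move=> f0; have N0 : (0 < N%:R^-1 :> R).
  by rewrite invr_gt0 ltr0n (leq_ltn_trans _ (ltn_ord j)).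
move/eqP; rewrite mule_eq0 eqe gt_eqF //= => /eqP sum0.
apply/eqP; rewrite eq_le f0 andbT.
by rewrite -sum0 (bigD1 j) //= leeDl // sume_ge0.
Qed.

Theorem lemma6 (R : realType) (N : nat) (E : finType) (ini ter : E -> 'I_N)
  (K : Type) (d : K -> K -> R) (Kp : 'I_N -> set K)
  (w : E -> K -> K) (p : E -> K -> R) (a : R) :
  is_CMS ini ter d Kp w p a ->
  (forall e, dini_continuous d (Kp (ini e)) (p e)) ->
  (exists delta : R, 0 < delta /\ forall e y, Kp (ini e) y -> delta <= p e y) ->
  forall (xs : 'I_N -> K), (forall i, Kp i (xs i)) ->
  forall (x : K) (m : int), m <= 0 ->
  forall P : K -> set (Sigma E) -> \bar R,
    (forall y, is_probability_on (A_sigma m) (P y)) ->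
    (forall y (s : seq E), (0 < size s)%N -> P y (cyl m s) = (cylP w p y s)%:E) ->
    abs_continuous_on (A_sigma m) (P x)
      (fun A => ((N%:R)^-1)%:E * \sum_(i < N) P (xs i) A)%E.
Proof.
move=> cms dini [δ [δ0 p_ge_δ]] xs Kxs x m _ P P_prob P_cyl A mA avg0.
have [j Kx] := cms_Kp_cover cms x.
apply: (abs_continuous_on_same_part cms dini δ0 p_ge_δ Kx (Kxs j) P_prob) => //.
by apply: (sume_avg_eq0 j _ avg0) => i; case: (P_prob (xs i)) => _ + _ _; apply.
Qed.
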